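(* Let $G$ be a finite simple graph with diameter $2$. Then $G$ is $\chi_\rho$-critical if and only if for each edge $e=u_1u_2 \in E(G)$ at least one of the following statements holds: (i) $\alpha(G-e)>\alpha(G)$; (ii) there exist indices $\{i,j\}=\{1,2\}$, a vertex $y \in N_G[u_i]$ with $d_{G-e}(y,u_j) \geq 3$, and a maximum independent set $A$ of $G$ (i.e., $|A|=\alpha(G)$) such that $A \cap \{y, u_j\}= \emptyset$.
   Context: $N_G[v]=N_G(v)\cup\{v\}$ is the closed neighborhood; $\alpha(G)$ is the independence number. A $k$-packing coloring of $G$ is a map $c:V(G)\to\{1,\ldots,k\}$ such that two distinct vertices $u,v$ with $c(u)=c(v)=i$ satisfy $d_G(u,v)>i$ (distance between vertices in different components is infinite); $\chi_\rho(G)$ is the smallest $k$ for which such a coloring exists. $G$ is $\chi_\rho$-critical if $\chi_\rho(H)<\chi_\rho(G)$ for every proper subgraph $H$ of $G$. $G-e$ is $G$ with edge $e$ deleted. *)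

From mathcomp Require Import all_boot.
Set Implicit Arguments. Unset Strict Implicit. Unset Printing Implicit Defensive.

(* A (sub)graph on the finite ambient type T is given by a vertex set
   V : {set T} and an adjacency relation E : rel T (only its restriction to
   V matters).  A finite simple graph G is a symmetric irreflexive
   relation E on T, with vertex set [set: T]. *)

Section Graphs.
Variable T : finType.

(* reach V E k u v : there is a walk of length at most k from u to v
   using only vertices of V, i.e. d_{(V,E)}(u,v) <= k. *)
Fixpoint reach (V : {set T}) (E : rel T) (k : nat) (u v : T) : bool :=
  match k with
  | 0 => (u == v) && (u \in V)
  | k'.+1 => reach V E k' u v ||
             [exists w, [&& reach V E k' u w, E w v & v \in V]]
  end.

Definition packing_coloring (V : {set T}) (E : rel T) (k : nat)
  (c : {ffun T -> 'I_k.+1}) : bool :=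
  [forall v in V, 0 < c v] &&
  [forall u in V, forall v in V,
     (u != v) && (c u == c v) ==> ~~ reach V E (c u) u v].

Definition packable (V : {set T}) (E : rel T) (k : nat) : bool :=
  [exists c : {ffun T -> 'I_k.+1}, packing_coloring V E c].

Lemma packable_exists (V : {set T}) (E : rel T) : exists k, packable V E k.
Proof.
exists #|T|; apply/existsP.
exists [ffun v => inord (enum_rank v).+1 : 'I_#|T|.+1].
apply/andP; split.
  by apply/forall_inP => v _; rewrite ffunE inordK // ltnS.
apply/forall_inP => u _; apply/forall_inP => v _; apply/implyP.
case/andP => uv /eqP; rewrite !ffunE => /(congr1 val).
rewrite /= !inordK ?ltnS // => -[] /val_inj Euv.
have := enum_rankK u; rewrite Euv enum_rankK => Evu.
by rewrite Evu eqxx in uv.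
Qed.

Definition chi_rho (V : {set T}) (E : rel T) : nat :=
  ex_minn (packable_exists V E).

Definition subgraph (E : rel T) (V' : {set T}) (E' : rel T) : Prop :=
  symmetric E' /\ (forall x y, E' x y -> [/\ x \in V', y \in V' & E x y]).

Definition proper_subgraph (E : rel T) (V' : {set T}) (E' : rel T) : Prop :=
  subgraph E V' E' /\ (V' != setT \/ exists x y, E x y /\ ~~ E' x y).

Definition chi_critical (E : rel T) : Prop :=
  forall V' E', proper_subgraph E V' E' -> chi_rho V' E' < chi_rho setT E.

Definition independent (V : {set T}) (E : rel T) (A : {set T}) : bool :=
  (A \subset V) && [forall x in A, forall y in A, ~~ E x y].

Definition alpha (V : {set T}) (E : rel T) : nat :=
  \max_(A : {set T} | independent V E A) #|A|.

Definition del_edge (E : rel T) (u1 u2 : T) : rel T :=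
  fun x y => E x y && ~~ (((x == u1) && (y == u2)) || ((x == u2) && (y == u1))).

Definition diameter2 (E : rel T) : Prop :=
  (forall u v, reach setT E 2 u v) /\ (exists u v, ~~ reach setT E 1 u v).

End Graphs.

(* In a graph G of diameter 2, two vertices sharing a colour i >= 2 would be at
   distance <= 2 <= i, so a packing colouring is injective off its colour class 1,
   which is independent; with a maximum independent set as class 1 this gives
   chi_rho(G) = n - alpha(G) + 1.  Every proper subgraph of G lies in some G - e
   (a missing vertex v is dropped together with an edge at v), so G is critical
   iff every G - e, e = u1u2, has a packing colouring with n - alpha(G) colours.

   In G - e, a vertex w outside {u1, u2} at distance >= 3 from p forces p to be
   an endpoint of e and w to be adjacent to the other endpoint.  Hence the pairs
   at distance >= 3 in G - e contain no triangle, and of two disjoint such pairs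
   neither is at distance >= 4.  In a packing colouring of G - e with
   n - alpha(G) colours, at most one colour other than 1 is then repeated, and
   only once.  Counting shows that either nothing is repeated and class 1 is an
   independent set of G - e larger than alpha(G), which is (i), or class 1 is a
   maximum independent set of G missing the repeated far pair, which yields (ii).
   Conversely, (i) and (ii) directly give such colourings: colour 1 on a maximum
   independent set, and in case (ii) one colour for the far pair. *)

From mathcomp Require Import all_boot zify.
Set Implicit Arguments. Unset Strict Implicit. Unset Printing Implicit Defensive.

Section Reach.
Variable T : finType.
Implicit Types (V : {set T}) (F : rel T).

Lemma reach_le V F j k u v : j <= k -> reach V F j u v -> reach V F k u v.
Proof.
elim: k => [|k IH]; first by rewrite leqn0 => /eqP ->.
by rewrite leq_eqVlt ltnS => /predU1P[-> //| /IH h /h /= ->].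
Qed.

Lemma reach_refl V F k v : v \in V -> reach V F k v v.
Proof. by move=> vV; apply: (reach_le (leq0n k)); rewrite /= eqxx. Qed.

Lemma reach_memr V F k u v : reach V F k u v -> v \in V.
Proof.
elim: k v => [|k IH] v /=; first by case/andP=> /eqP <-.
by case/orP=> [/IH //|/existsP[w /and3P[]]].
Qed.

Lemma reach1 V F u v : u \in V -> v \in V -> F u v -> reach V F 1 u v.
Proof.
by move=> uV vV Fuv; apply/orP; right; apply/existsP; exists u; rewrite /= eqxx uV Fuv.
Qed.

Lemma reach_cat V F i j u w v :
  reach V F i u w -> reach V F j w v -> reach V F (i + j) u v.
Proof.
move=> uw; elim: j v => [|j IH] v /=; first by case/andP=> /eqP <- _; rewrite addn0.
rewrite addnS /=; case/orP=> [/IH -> //|/existsP[m /and3P[wm mv vV]]].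
by apply/orP; right; apply/existsP; exists m; rewrite mv vV IH.
Qed.

Lemma reach_sym V F k : symmetric F -> symmetric (reach V F k).
Proof.
move=> Fsym; suff rev u v : reach V F k u v -> reach V F k v u.
  by move=> u v; apply/idP/idP; apply: rev.
elim: k u v => [|k IH] u v; first by case/andP=> /eqP -> vV; rewrite /= eqxx.
case/orP=> [/IH /(reach_le (leqnSn k)) //|/existsP[w /and3P[uw wv vV]]].
rewrite -add1n; apply: reach_cat (IH _ _ uw).
by apply: reach1; [|exact: reach_memr uw|rewrite Fsym].
Qed.

Lemma reach_sub V V' F F' k u v : V' \subset V -> subrel F' F ->
  reach V' F' k u v -> reach V F k u v.
Proof.
move=> /subsetP sV sF; elim: k v => [|k IH] v /=; first by case/andP=> -> /sV.
case/orP=> [/IH -> //|/existsP[w /and3P[uw wv vV]]].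
by apply/orP; right; apply/existsP; exists w; rewrite IH // sF // sV.
Qed.

Lemma reach1E F u v : reach setT F 1 u v = (u == v) || F u v.
Proof.
apply/idP/idP => [|/predU1P[<-|Fuv]]; [|exact: reach_refl|exact: reach1].
case/orP=> [/andP[-> //]|/existsP[w /and3P[/andP[/eqP <- _] -> _]]].
by rewrite orbT.
Qed.

Lemma reach2E F u v :
  reach setT F 2 u v = [|| u == v, F u v | [exists w, F u w && F w v]].
Proof.
have -> : reach setT F 2 u v = reach setT F 1 u v ||
    [exists w, [&& reach setT F 1 u w, F w v & v \in setT]] by [].
rewrite reach1E -orbA; congr (_ || _).
apply/idP/idP => [/orP[-> //|/existsP[w]]|/orP[Fuv|/existsP[w /andP[uw wv]]]].
- rewrite reach1E in_setT andbT => /andP[/predU1P[<- -> //|uw wv]].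
  by apply/orP; right; apply/existsP; exists w; rewrite uw.
- by rewrite Fuv.
- by apply/orP; right; apply/existsP; exists w; rewrite reach1E uw orbT wv in_setT.
Qed.

End Reach.

Section Packing.
Variable T : finType.
Implicit Types (V : {set T}) (F : rel T) (A : {set T}).

Lemma packable_sub V V' F F' k : V' \subset V -> subrel F' F ->
  packable V F k -> packable V' F' k.
Proof.
move=> sV sF /existsP[c /andP[/forall_inP cpos /forall_inP cfar]].
apply/existsP; exists c; apply/andP; split.
  by apply/forall_inP => v /(subsetP sV)/cpos.
apply/forall_inP => u uV'; apply/forall_inP => v vV'; apply/implyP => uvc.
have /forall_inP/(_ v (subsetP sV _ vV'))/implyP/(_ uvc) := cfar u (subsetP sV _ uV').
exact/contra/reach_sub.
Qed.

Lemma packable_widen V F j k : j <= k -> packable V F j -> packable V F k.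
Proof.
move=> jk /existsP[c /andP[/forall_inP cpos /forall_inP cfar]].
apply/existsP; exists [ffun v => widen_ord (jk : j.+1 <= k.+1) (c v)].
apply/andP; split; first by apply/forall_inP => v /cpos; rewrite ffunE.
apply/forall_inP => u uV; apply/forall_inP => v vV; rewrite !ffunE.
exact: (forall_inP (cfar u uV) v vV).
Qed.

Lemma packable_chi_rho V F : packable V F (chi_rho V F).
Proof. by rewrite /chi_rho; case: ex_minnP. Qed.

Lemma packable_chi_rhoE V F k : packable V F k = (chi_rho V F <= k).
Proof.
apply/idP/idP => [|le_chi]; last exact: packable_widen le_chi (packable_chi_rho V F).
by rewrite /chi_rho; case: ex_minnP => m _; apply.
Qed.

Lemma chi_rho_subgraph V V' F F' : V' \subset V -> subrel F' F ->
  chi_rho V' F' <= chi_rho V F.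
Proof.
by move=> sV sF; rewrite -packable_chi_rhoE; apply: packable_sub (packable_chi_rho V F).
Qed.

Lemma card_le_alpha V F A : independent V F A -> #|A| <= alpha V F.
Proof. exact: (leq_bigmax_cond (F := fun A : {set T} => #|A|)). Qed.

Lemma alpha_witness V F : exists2 A, independent V F A & #|A| = alpha V F.
Proof.
have indep0 : independent V F set0.
  by rewrite /independent sub0set; apply/forall_inP => x; rewrite in_set0.
have [|A indA max_A] := @eq_bigmax_cond _ [pred A | independent V F A] (fun A => #|A|).
  by apply/card_gt0P; exists set0.
by exists A; rewrite // /alpha max_A.
Qed.

Lemma independent_subrel V F F' A : subrel F' F ->
  independent V F A -> independent V F' A.
Proof.
move=> sF /andP[sAV /forall_inP indA]; rewrite /independent sAV.
apply/forall_inP => x xA; apply/forall_inP => y yA.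
exact: contra (@sF x y) (forall_inP (indA x xA) y yA).
Qed.

Lemma independent_nonadj F A x y : independent setT F A -> x \in A -> y \in A -> ~~ F x y.
Proof. by case/andP=> _ /forall_inP indA /indA/forall_inP; apply. Qed.

End Packing.

Section Colourings.
Variable T : finType.
Implicit Types (F : rel T) (A : {set T}).

Lemma packable_of_classes F A m (g : T -> nat) :
  independent setT F A ->
  (forall v, v \notin A -> g v < m) ->
  (forall u v, u \notin A -> v \notin A -> u != v -> g u = g v ->
     ~~ reach setT F (g u).+2 u v) ->
  packable setT F m.+1.
Proof.
move=> indA g_lt g_far.
pose c := [ffun v => if v \in A then inord 1 else inord (g v).+2 : 'I_m.+2].
have cE v : c v = (if v \in A then 1 else (g v).+2) :> nat.
  by rewrite ffunE; case: ifP => vA; rewrite inordK // !ltnS g_lt ?vA.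
apply/existsP; exists c; apply/andP; split.
  by apply/forall_inP => v _; rewrite cE; case: ifP.
apply/forall_inP => u _; apply/forall_inP => v _; apply/implyP.
case/andP=> uv /eqP/(congr1 (@nat_of_ord _)); rewrite !cE.
case: ifP => uA; case: ifP => vA //.
  by rewrite reach1E negb_or uv (independent_nonadj indA).
by case=> guv; apply: g_far; rewrite ?uA ?vA.
Qed.

Lemma packable_compl_independent F A :
  independent setT F A -> packable setT F #|~: A|.+1.
Proof.
move=> indA; apply: (packable_of_classes (g := index^~ (enum (~: A))) indA).
  by move=> v vA; rewrite cardE index_mem mem_enum inE.
move=> u v uA vA uv /(congr1 (nth u (enum (~: A)))).
by rewrite !nth_index ?mem_enum ?inE // => /eqP; rewrite (negbTE uv).
Qed.

Lemma packable_far_pair F A y z : symmetric F -> independent setT F A ->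
  y \notin A -> z \notin A -> ~~ reach setT F 2 y z -> packable setT F #|~: A|.
Proof.
move=> Fsym indA yA zA far_yz.
have yz : y != z by apply: contraNneq far_yz => ->; apply: reach_refl.
have yz_sub : [set y; z] \subset ~: A by apply/subsetP => w /set2P[]->; rewrite inE.
set S := ~: A :\: [set y; z].
have -> : #|~: A| = #|S|.+2.
  have := subset_leq_card yz_sub.
  by rewrite /S cardsDS // cards2 yz; lia.
pose g v := if v \in [set y; z] then 0 else (index v (enum S)).+1.
apply: (packable_of_classes (g := g) indA) => [v vA|u v uA vA uv].
  rewrite /g; case: ifP => vyz //.
  by rewrite ltnS cardE index_mem mem_enum in_setD vyz in_setC vA.
rewrite /g; case: ifP => uyz; case: ifP => vyz //.
  move=> _; move: uyz vyz uv; rewrite !inE.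
  by case/orP=> /eqP-> /orP[]/eqP->; rewrite ?eqxx // reach_sym.
case=> /(congr1 (nth u (enum S))).
by rewrite !nth_index ?mem_enum ?in_setD ?uyz ?vyz ?in_setC ?uA ?vA // => /eqP; rewrite (negbTE uv).
Qed.

Definition colour_class k (c : {ffun T -> 'I_k.+1}) (i : nat) : {set T} :=
  [set v | c v == i :> nat].

Section Colouring.
Variables (F : rel T) (k : nat) (c : {ffun T -> 'I_k.+1}).
Hypothesis c_packing : packing_coloring setT F c.
Local Notation C1 := (colour_class c 1).

Lemma colouring_pos v : 0 < c v.
Proof. by have /andP[/forall_inP cpos _] := c_packing; apply: cpos. Qed.

Lemma colouring_gt0 (v : T) : 0 < k.
Proof. by have := ltn_ord (c v); have := colouring_pos v; lia. Qed.

Lemma colouring_gt1 v : v \notin C1 -> 1 < c v.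
Proof. by rewrite inE; have := colouring_pos v; lia. Qed.

Lemma colouring_far u v j : u != v -> c u = c v -> j <= c u ->
  ~~ reach setT F j u v.
Proof.
move=> uv cuv j_le; have /andP[_ /forall_inP cfar] := c_packing.
have /forall_inP/(_ v (in_setT v))/implyP := cfar u (in_setT u).
rewrite uv cuv eqxx => /(_ isT).
by apply: contra; apply: reach_le; rewrite -cuv.
Qed.

Lemma colour_class1_independent : irreflexive F -> independent setT F C1.
Proof.
move=> Firr; rewrite /independent subsetT.
apply/forall_inP => u uC; apply/forall_inP => v vC.
have [<-|uv] := eqVneq u v; first by rewrite Firr.
have cuv : c u = c v by apply: val_inj; move: uC vC; rewrite /= !inE => /eqP-> /eqP->.
have := colouring_far uv cuv; move: uC; rewrite inE => /eqP->.
by move=> /(_ 1 (leqnn 1)); rewrite reach1E negb_or uv.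
Qed.

Lemma card_injective_colours (S : {set T}) : S \subset ~: C1 -> {in S &, injective c} ->
  #|S| <= k.-1.
Proof.
move=> /subsetP sS injS; rewrite cardE -(size_map (fun v => nat_of_ord (c v))).
rewrite -(size_iota 2 k.-1); apply: uniq_leq_size.
  by rewrite map_inj_in_uniq ?enum_uniq // => u v; rewrite !mem_enum => uS vS /val_inj/injS; apply.
move=> _ /mapP[v vS ->]; rewrite mem_enum in vS.
have : v \notin C1 by rewrite -in_setC sS.
move/colouring_gt1; rewrite mem_iota.
by have := ltn_ord (c v); lia.
Qed.

Lemma colouring_diameter2 (v0 : T) : irreflexive F ->
  (forall u v, reach setT F 2 u v) -> #|T| - alpha setT F < k.
Proof.
move=> Firr Fdiam2.
have inj : {in ~: C1 &, injective c}.
  move=> u v; rewrite in_setC => /colouring_gt1 cu _ cuv.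
  by apply/eqP; apply: contraTT (Fdiam2 u v) => uv; apply: colouring_far.
have := card_injective_colours (subxx _) inj.
have := card_le_alpha (colour_class1_independent Firr).
by have := cardsC C1; have := colouring_gt0 v0; lia.
Qed.

End Colouring.

Lemma chi_rho_diameter2 F (v0 : T) : irreflexive F ->
  (forall u v, reach setT F 2 u v) -> chi_rho setT F = (#|T| - alpha setT F).+1.
Proof.
move=> Firr Fdiam2; apply/eqP; rewrite eqn_leq; apply/andP; split.
  have [A indA <-] := alpha_witness setT F.
  by rewrite -packable_chi_rhoE -(cardsC A) addKn; apply: packable_compl_independent.
have /existsP[c c_packing] := packable_chi_rho setT F.
exact: colouring_diameter2 c_packing v0 Firr Fdiam2.
Qed.

End Colourings.

Section DeleteEdge.
Variables (T : finType) (E : rel T) (u1 u2 : T).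
Hypotheses (Esym : symmetric E) (Eirr : irreflexive E) (He : E u1 u2).
Hypothesis Ediam2 : forall u v, reach setT E 2 u v.
Local Notation F := (del_edge E u1 u2).
Local Notation U := [set u1; u2].
Local Notation far x y := (~~ reach setT F 2 x y).

Lemma edge_neq : u1 != u2.
Proof. by apply: contraTneq He => ->; rewrite Eirr. Qed.

Lemma del_edge_subrel : subrel F E.
Proof. by move=> x y /andP[]. Qed.

Lemma del_edge_irr : irreflexive F.
Proof. by move=> x; rewrite /del_edge Eirr. Qed.

Lemma del_edge_sym : symmetric F.
Proof.
move=> x y; rewrite /del_edge Esym.
by case: (x == u1); case: (x == u2); case: (y == u1); case: (y == u2).
Qed.

Lemma del_edge_off x y : x \notin U -> E x y -> F x y.
Proof. by rewrite !inE negb_or => /andP[/negbTE x1 /negbTE x2] Exy; rewrite /del_edge Exy x1 x2. Qed.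

Lemma del_edge_independent (A : {set T}) w : w \in U -> w \notin A ->
  independent setT F A -> independent setT E A.
Proof.
move=> wU wA /andP[_ /forall_inP indA]; rewrite /independent subsetT.
apply/forall_inP => x xA; apply/forall_inP => y yA.
have := forall_inP (indA x xA) y yA; rewrite /del_edge negb_and negbK.
case/orP=> [// | /orP[]/andP[/eqP ex /eqP ey]]; rewrite ex in xA; rewrite ey in yA;
  by move: wA; case/set2P: wU => ->; rewrite ?xA ?yA.
Qed.

Lemma notin_edge x y z : x \in U -> y \in U -> x != y -> z != x -> z != y -> z \notin U.
Proof.
by rewrite !inE => /orP[]/eqP-> /orP[]/eqP->; rewrite ?eqxx // => _ /negbTE-> /negbTE->.
Qed.

Lemma far_neq x y : far x y -> x != y.
Proof. by apply: contraNneq => ->; apply: reach_refl. Qed.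

Lemma far_sym x y : far x y = far y x.
Proof. by rewrite reach_sym //; apply: del_edge_sym. Qed.

Lemma reach2_off x y : x \notin U -> y \notin U -> reach setT F 2 x y.
Proof.
move=> xU yU; have := Ediam2 x y; rewrite !reach2E.
case/or3P=> [-> // | /(del_edge_off xU) -> | /existsP[w /andP[xw wy]]]; rewrite ?orbT //.
apply/orP; right; apply/orP; right; apply/existsP; exists w.
by rewrite del_edge_off // del_edge_sym del_edge_off // Esym.
Qed.

Lemma far_off_edge w p : w \notin U -> far w p ->
  (p == u1) && E w u2 || (p == u2) && E w u1.
Proof.
move=> wU far_wp; have := Ediam2 w p; rewrite reach2E.
case/or3P=> [/eqP wp | /(del_edge_off wU) Fwp | /existsP[m /andP[wm mp]]].
- by move: far_wp; rewrite reach2E wp eqxx.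
- by move: far_wp; rewrite reach2E Fwp orbT.
have Fwm := del_edge_off wU wm.
have : ~~ F m p.
  apply: contra far_wp => Fmp; rewrite reach2E.
  by apply/orP; right; apply/orP; right; apply/existsP; exists m; rewrite Fwm.
rewrite /del_edge mp negbK => /orP[]/andP[/eqP em /eqP ep].
  by rewrite ep -em wm eqxx orbT.
by rewrite ep -em wm eqxx.
Qed.

Lemma far_off_mem w p : w \notin U -> far w p -> p \in U.
Proof. by move=> wU /(far_off_edge wU) /orP[]/andP[/eqP-> _]; rewrite !inE eqxx ?orbT. Qed.

Lemma far_off_adj w p q : w \notin U -> far w p -> q \in U -> q != p -> E w q.
Proof. by move=> wU /(far_off_edge wU) /orP[]/andP[/eqP-> Ew] /set2P[]->; rewrite ?eqxx. Qed.

Lemma far_off_unique w p q : w \notin U -> far w p -> far w q -> p = q.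
Proof.
move=> wU far_wp far_wq; have qU := far_off_mem wU far_wq.
apply/eqP; apply: contraNT far_wq => pq.
have Ewq : E w q by apply: far_off_adj wU far_wp qU _; rewrite eq_sym.
by rewrite reach2E del_edge_off ?orbT.
Qed.

Lemma far_mem x y : far x y -> (x \in U) || (y \in U).
Proof. by case: (boolP (x \in U)) => //= xU /(far_off_mem xU). Qed.

Lemma no_far_triangle x y z : far x y -> far y z -> far x z -> False.
Proof.
move=> fxy fyz fxz.
have [xU|xU] := boolP (x \in U); last first.
  by move/far_neq: fyz; rewrite (far_off_unique xU fxy fxz) eqxx.
rewrite far_sym in fxy; have [yU|yU] := boolP (y \in U); last first.
  by move/far_neq: fxz; rewrite (far_off_unique yU fxy fyz) eqxx.
rewrite far_sym in fxz; rewrite far_sym in fyz.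
have zU : z \notin U by apply: notin_edge yU xU (far_neq fxy) (far_neq fyz) (far_neq fxz).
by move/far_neq: fxy; rewrite (far_off_unique zU fyz fxz) eqxx.
Qed.

Lemma no_far_disjoint x z u v : far x z -> ~~ reach setT F 3 u v ->
  x != u -> x != v -> z != u -> z != v -> False.
Proof.
move=> fxz ruv; have fuv : far u v by apply: contra ruv; apply: reach_le.
wlog xU : x z fxz / x \notin U => [IH xu xv zu zv|].
  have [xU|xU] := boolP (x \in U); last exact: IH fxz xU xu xv zu zv.
  have [zU|zU] := boolP (z \in U); last by apply: (IH z x) zU zu zv xu xv; rewrite far_sym.
  have uU : u \notin U by apply: notin_edge xU zU (far_neq fxz) _ _; rewrite eq_sym.
  have vU : v \notin U by apply: notin_edge xU zU (far_neq fxz) _ _; rewrite eq_sym.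
  by rewrite reach2_off in fuv.
wlog uU : u v ruv fuv / u \notin U => [IH xu xv zu zv|].
  have [uU|uU] := boolP (u \in U); last exact: IH ruv fuv uU xu xv zu zv.
  have [vU|vU] := boolP (v \in U); last first.
    apply: (IH v u) vU xv xu zv zu; last by rewrite far_sym.
    by rewrite reach_sym //; apply: del_edge_sym.
  by have := notin_edge uU vU (far_neq fuv) zu zv; rewrite (far_off_mem xU fxz).
move=> _ _ _ zv; have vU := far_off_mem uU fuv.
have Fxv : F x v by apply/(del_edge_off xU)/(far_off_adj xU fxz vU); rewrite eq_sym.
by move/negP: ruv; apply; apply: (@reach_cat _ _ _ 2 1 _ x); [apply: reach2_off | apply: reach1].
Qed.

Lemma far_witness (A : {set T}) x z : far x z -> x \notin A -> z \notin A ->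
  exists ui uj, ((ui, uj) = (u1, u2) \/ (ui, uj) = (u2, u1)) /\
  exists y, ((y == ui) || E ui y) /\ far y uj /\ y \notin A /\ uj \notin A.
Proof.
wlog zU : x z / z \in U => [IH fxz xA zA|fxz xA zA].
  have [zU|zU] := boolP (z \in U); first exact: IH zU fxz xA zA.
  apply: (IH z x) zA xA; last by rewrite far_sym.
  by have := far_mem fxz; rewrite (negbTE zU) orbF.
have neighbour q : q \in U -> q != z -> (x == q) || E q x.
  move=> qU qz; have [xU|xU] := boolP (x \in U).
    by apply/orP; left; apply/eqP; apply: contraTeq xU => xq; apply: notin_edge qU zU qz xq (far_neq fxz).
  by rewrite Esym (far_off_adj xU fxz qU qz) orbT.
case/set2P: zU => ez; subst z.
  exists u2, u1; split; first by right.
  by exists x; rewrite fxz xA zA neighbour ?inE ?eqxx ?orbT // eq_sym edge_neq.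
exists u1, u2; split; first by left.
by exists x; rewrite fxz xA zA neighbour ?inE ?eqxx ?orbT // edge_neq.
Qed.

Definition far_pair_outside_max_independent : Prop :=
  exists (ui uj : T),
    ((ui, uj) = (u1, u2) \/ (ui, uj) = (u2, u1)) /\
    exists y : T,
      ((y == ui) || E ui y) /\
      ~~ reach setT F 2 y uj /\
      exists A : {set T},
        independent setT E A /\ #|A| = alpha setT E /\
        y \notin A /\ uj \notin A.

Section Colouring.
Variables (k : nat) (c : {ffun T -> 'I_k.+1}).
Hypothesis c_packing : packing_coloring setT F c.
Local Notation C1 := (colour_class c 1).

Lemma colouring_injective_off x z : x != z -> c x = c z -> x \notin C1 ->
  {in ~: C1 :\ z &, injective c}.
Proof.
move=> xz cxz xC u v; rewrite !in_setD1 !in_setC => /andP[uz uC] /andP[vz vC] cuv.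
apply/eqP/negPn/negP => uv.
have far_of (a b : T) : a != b -> a \notin C1 -> c a = c b -> far a b.
  by move=> ab aC cab; exact (colouring_far c_packing ab cab (colouring_gt1 c_packing aC)).
have zC : z \notin C1 by move: xC; rewrite /colour_class !inE cxz.
have [cux|cux] := eqVneq (c u) (c x).
  apply: (@no_far_triangle z u v); apply: far_of; rewrite // 1?eq_sym //.
    by rewrite -cxz cux.
  by rewrite -cxz -cux.
have ux : u != x by apply: contraNneq cux => ->.
have vx : v != x by apply: contraNneq cux => <-; rewrite cuv.
have [c3u|c3x] : 2 < c u \/ 2 < c x.
  case: (ltngtP (c u) (c x)) => [lt|gt|/val_inj eq]; last by rewrite eq eqxx in cux.
    by right; apply: leq_ltn_trans lt; exact (colouring_gt1 c_packing uC).
  by left; apply: leq_ltn_trans gt; exact (colouring_gt1 c_packing xC).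
  apply: no_far_disjoint (far_of x z xz xC cxz) (colouring_far c_packing uv cuv c3u) _ _ _ _;
    by rewrite eq_sym.
exact: no_far_disjoint (far_of u v uv uC cuv) (colouring_far c_packing xz cxz c3x) ux uz vx vz.
Qed.

Lemma colouring_far_pair : k <= #|T| - alpha setT E -> alpha setT F <= alpha setT E ->
  far_pair_outside_max_independent.
Proof.
move=> k_le alphaF_le.
have C1_indep : independent setT F C1 := colour_class1_independent c_packing del_edge_irr.
have C1_le : #|C1| <= alpha setT E := leq_trans (card_le_alpha C1_indep) alphaF_le.
have k_gt0 := colouring_gt0 c_packing u1.
have [/dinjectiveP inj | /dinjectivePn[x xC [z]]] := boolP (dinjectiveb c (~: C1)).
  have := card_injective_colours c_packing (subxx _) inj.
  by have := cardsC C1; lia.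
rewrite inE in_setC => /andP[zx zC] cxz; rewrite in_setC in xC.
have xz : x != z by rewrite eq_sym.
have fxz : far x z := colouring_far c_packing xz cxz (colouring_gt1 c_packing xC).
have card_off_z :=
  card_injective_colours c_packing (subD1set _ _) (colouring_injective_off xz cxz xC).
have card_split := cardsD1 z (~: C1); rewrite in_setC zC add1n in card_split.
have C1_card : #|C1| = alpha setT E by have := cardsC C1; lia.
have C1_indepE : independent setT E C1.
  case/orP: (far_mem fxz) => [xU|zU].
    exact: del_edge_independent xU xC C1_indep.
  exact: del_edge_independent zU zC C1_indep.
have [ui [uj [e_ui [y [y_near [fyuj [yC ujC]]]]]]] := far_witness fxz xC zC.
by exists ui, uj; split=> //; exists y; do 2!split=> //; exists C1.
Qed.

End Colouring.

Lemma packable_del_edge_of_far_pair : far_pair_outside_max_independent ->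
  packable setT F (#|T| - alpha setT E).
Proof.
case=> ui [uj [_ [y [_ [fyuj [A [A_indep [A_card [yA ujA]]]]]]]]].
rewrite -A_card -(cardsC A) addKn.
exact: packable_far_pair del_edge_sym (independent_subrel del_edge_subrel A_indep) yA ujA fyuj.
Qed.

Lemma packable_del_edge_of_alpha_lt : alpha setT E < alpha setT F ->
  packable setT F (#|T| - alpha setT E).
Proof.
move=> alpha_lt; have [A A_indep A_card] := alpha_witness setT F.
apply: packable_widen (packable_compl_independent A_indep).
by have := cardsC A; lia.
Qed.

Lemma packable_del_edgeP : packable setT F (#|T| - alpha setT E) <->
  alpha setT E < alpha setT F \/ far_pair_outside_max_independent.
Proof.
split=> [F_packable|[]]; last first.
- exact: packable_del_edge_of_far_pair.
- exact: packable_del_edge_of_alpha_lt.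
have [lt|ge] := ltnP (alpha setT E) (alpha setT F); [by left | right].
by case/existsP: F_packable => c c_packing; apply: colouring_far_pair c_packing _ ge.
Qed.

End DeleteEdge.

Lemma chi_critical_del_edgeP (T : finType) (E : rel T) :
  symmetric E -> (forall v, exists u, E v u) ->
  chi_critical E <->
  (forall u1 u2, E u1 u2 -> chi_rho setT (del_edge E u1 u2) < chi_rho setT E).
Proof.
move=> Esym E_total; split=> [crit u1 u2 e12 | del_lt V' E' [[E'sym E'_sub] proper]].
  apply: crit; split; first split.
  - exact: del_edge_sym.
  - by move=> x y Fxy; rewrite !in_setT (del_edge_subrel Fxy).
  - by right; exists u1, u2; rewrite /del_edge e12 !eqxx.
have [u1 [u2 [e12 sub_del]]] : exists u1 u2, E u1 u2 /\ subrel E' (del_edge E u1 u2).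
  case: proper => [V'_proper | [x [y [Exy E'xy]]]].
    have [v vV'] : exists v, v \notin V'.
      by move: V'_proper; rewrite eqEsubset subsetT /= => /subsetPn[v _ vV']; exists v.
    have [u Evu] := E_total v; exists v, u; split=> // a b /E'_sub[aV bV Eab].
    have av : a != v by apply: contraNneq vV' => <-.
    have bv : b != v by apply: contraNneq vV' => <-.
    by rewrite /del_edge Eab (negbTE av) (negbTE bv) andbF.
  exists x, y; split=> // a b E'ab; have [_ _ Eab] := E'_sub a b E'ab.
  rewrite /del_edge Eab; apply/norP; split; apply: contraNN E'xy => /andP[/eqP ea /eqP eb].
    by rewrite -ea -eb.
  by rewrite -ea -eb E'sym.
by apply: leq_ltn_trans (del_lt u1 u2 e12); apply: chi_rho_subgraph (subsetT _) sub_del.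
Qed.

Lemma diameter2_neighbour (T : finType) (E : rel T) : diameter2 E -> forall v, exists u, E v u.
Proof.
case=> Ediam2 [p [q]]; rewrite reach1E negb_or => /andP[pq _] v.
have [w vw] : exists w, v != w.
  by case: (eqVneq v p) => [->|vp]; [exists q | exists p].
have := Ediam2 v w; rewrite reach2E (negbTE vw) /=.
by case/orP=> [Evw|/existsP[u /andP[Evu _]]]; [exists w | exists u].
Qed.

Theorem theorem4p1 (T : finType) (E : rel T)
  (Esym : symmetric E) (Eirr : irreflexive E) (Hdiam : diameter2 E) :
  chi_critical E <->
  (forall u1 u2 : T, E u1 u2 ->
     alpha setT (del_edge E u1 u2) > alpha setT E
     \/ exists (ui uj : T),
          ((ui, uj) = (u1, u2) \/ (ui, uj) = (u2, u1)) /\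
          exists y : T,
            ((y == ui) || E ui y) /\
            ~~ reach setT (del_edge E u1 u2) 2 y uj /\
            exists A : {set T},
              independent setT E A /\ #|A| = alpha setT E /\
              y \notin A /\ uj \notin A).
Proof.
have [Ediam2 [v0 _]] := Hdiam.
rewrite (chi_critical_del_edgeP Esym (diameter2_neighbour Hdiam)).
rewrite (chi_rho_diameter2 v0 Eirr Ediam2).
split=> crit u1 u2 e12; have := crit u1 u2 e12;
  by rewrite ltnS -packable_chi_rhoE (packable_del_edgeP Esym Eirr e12 Ediam2).
Qed.
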